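(* Let $A$ be an $F_n$-good $n\times n$ matrix. Then: (1) Any entry $1$ in column $1$ of $A$ lies in row $1$ or row $n$; similarly any entry $1$ in column $n$ lies in row $1$ or row $n$. (2) Each of the rows $A_2,A_3,\ldots,A_{n-1}$ is a standard basis vector $\vec{e}_j$ (a row of the identity matrix $I_n$), and these $n-2$ rows are pairwise distinct. (3) Each of the rows $A_1$ and $A_n$ contains either one or two entries equal to $1$. (4) Row $A_1$ has an entry $1$ in column $1$ or in column $n$, and the same holds for row $A_n$. If $A_1$ (resp. $A_n$) has a second entry equal to $1$, it lies in column $3$ or column $n-2$.
   Context: $F_n$ is the set of vectors $\vec{x}=(x_1,\ldots,x_n)\in\mathbb{Z}_2^n$ with no $i$ such that $x_i=x_{i+1}=1$. An $n\times n$ matrix $A$ over $\mathbb{Z}_2$ is $F_n$-good if it is invertible and $A\vec{x}\in F_n$ for all $\vec{x}\in F_n$. $A_i$ denotes the $i$-th row of $A$, $A_{i,j}$ its $(i,j)$ entry, and $\vec{e}_j$ the $j$-th standard basis vector of $\mathbb{Z}_2^n$. *)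

From HB Require Import structures.
From mathcomp Require Import all_boot all_order all_algebra.
Set Implicit Arguments. Unset Strict Implicit. Unset Printing Implicit Defensive.
Import GRing.Theory.
Local Open Scope ring_scope.

(* Vectors of Z_2^n are column vectors 'cV['F_2]_n; index i : 'I_n stands for
   the paper's index i+1. *)

Definition inFn (n : nat) (x : 'cV['F_2]_n) : Prop :=
  forall (i j : 'I_n), nat_of_ord j = (nat_of_ord i).+1 ->
    ~ (x i 0 = 1 /\ x j 0 = 1).

Definition Fn_good (n : nat) (A : 'M['F_2]_n) : Prop :=
  A \in unitmx /\ forall x : 'cV['F_2]_n, inFn x -> inFn (A *m x).

From HB Require Import structures.
From mathcomp Require Import all_boot all_order all_algebra zify.
Set Implicit Arguments.
Unset Strict Implicit.
Unset Printing Implicit Defensive.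

(* Feeding A the vectors e_j and e_j + e_k, both in F_n when j and k are not
   adjacent, shows that a 1 in row r and a 1 in row r+1 always lie in adjacent
   columns.  An invertible matrix has nonzero, pairwise distinct rows, so two
   rows whose ones are all forced into one common column must coincide.
   Applied to the two neighbours of an inner row, this forbids a 1 of that row
   in column 1 or n, and forbids two ones in it.  The ones of an end row are
   all adjacent to a single 1 of the neighbouring row, so there are at most
   two of them, and two of them sit two columns apart. *)

Import GRing.Theory.
Local Open Scope ring_scope.

Lemma F2_neq1 (x : 'F_2) : x != 1 -> x = 0.
Proof. by case: x => [[|[|m]] Hm] //= _; apply/val_inj. Qed.

Lemma F2_eq1_inj (x y : 'F_2) : (x == 1) = (y == 1) -> x = y.
Proof.
case: (eqVneq x 1) (eqVneq y 1) => [-> [-> //|//] | /F2_neq1-> [//|/F2_neq1->//]].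
Qed.

Section UnitRows.
Variables (R : comUnitRingType) (n : nat) (A : 'M[R]_n).
Hypothesis unitA : A \in unitmx.

Let row_mulmxK i : row i A *m invmx A = delta_mx 0 i.
Proof. by rewrite rowE mulmxK. Qed.

Lemma unitmx_row_inj : injective (fun i => row i A).
Proof.
move=> i i' /(congr1 (mulmx^~ (invmx A))); rewrite /= !row_mulmxK.
move/matrixP/(_ 0 i); rewrite !mxE !eqxx /=.
by case: eqP => // _ /eqP; rewrite oner_eq0.
Qed.

Lemma unitmx_row_neq0 i : row i A != 0.
Proof.
apply/eqP=> Ai0; have /matrixP/(_ 0 i) := row_mulmxK i.
by rewrite Ai0 mul0mx !mxE !eqxx => /eqP; rewrite eq_sym oner_eq0.
Qed.

End UnitRows.

Definition ones m n (A : 'M['F_2]_(m, n)) (i : 'I_m) : {set 'I_n} :=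
  [set j | A i j == 1].

Lemma ones_inj n (A : 'M['F_2]_n) : A \in unitmx -> injective (ones A).
Proof.
move=> unitA i i' /setP eq_ones; apply: (unitmx_row_inj unitA); apply/rowP => j.
by rewrite !mxE; apply: F2_eq1_inj; have := eq_ones j; rewrite !inE.
Qed.

Lemma row_has_one n (A : 'M['F_2]_n) i : A \in unitmx -> exists j, A i j = 1.
Proof.
move=> unitA; case: (pickP (fun j => A i j == 1)) => [j /eqP|no_one]; first by exists j.
case/eqP: (unitmx_row_neq0 unitA i); apply/rowP => j.
by rewrite !mxE; apply: F2_neq1; rewrite no_one.
Qed.

Lemma col_has_one n (A : 'M['F_2]_n) j : A \in unitmx -> exists i, A i j = 1.
Proof.
by rewrite -unitmx_tr => /(row_has_one j)[i]; rewrite mxE; exists i.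
Qed.

Lemma single_common_one_eq n (A : 'M['F_2]_n) a b : A \in unitmx ->
  (forall k k', A a k = 1 -> A b k' = 1 -> k = k') -> a = b.
Proof.
move=> unitA same; apply: (ones_inj unitA).
have [ka Aaka] := row_has_one a unitA; have [kb Abkb] := row_has_one b unitA.
apply/setP => k; rewrite !inE; apply/eqP/eqP => [Aak|Abk].
  by rewrite (same _ _ Aak Abkb).
by rewrite -(same _ _ Aaka Abk).
Qed.

Definition adjacent (j k : nat) := (j.+1 == k) || (k.+1 == j).

Lemma adjacentC j k : adjacent j k = adjacent k j.
Proof. by rewrite /adjacent orbC. Qed.

Definition extremal n (i : 'I_n) : Prop := nat_of_ord i = 0%N \/ nat_of_ord i = n.-1.

Section Indices.
Variable n : nat.
Implicit Type i : 'I_n.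

Lemma extremal_or_inner i : extremal i \/ (0 < i < n.-1)%N.
Proof. by rewrite /extremal; have := ltn_ord i; lia. Qed.

Lemma inner_neighbours i : (0 < i < n.-1)%N ->
  exists a b : 'I_n, [/\ adjacent a i, adjacent b i & a != b].
Proof.
move=> i_inner; have lt_pred : (i.-1 < n)%N by lia.
have lt_succ : (i.+1 < n)%N by lia.
by exists (Ordinal lt_pred), (Ordinal lt_succ); rewrite /adjacent -val_eqE /=; split; lia.
Qed.

Lemma exists_adjacent i : (1 < n)%N -> exists r : 'I_n, adjacent r i.
Proof.
move=> n_gt1; have [i0|i_gt0] := posnP i; first by exists (Ordinal n_gt1); rewrite /adjacent i0.
have lt_pred : (i.-1 < n)%N by have := ltn_ord i; lia.
by exists (Ordinal lt_pred); rewrite /adjacent /=; lia.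
Qed.

Lemma card_adjacent_le2 (S : {set 'I_n}) t :
  {in S, forall k : 'I_n, adjacent t k} -> (#|S| <= 2)%N.
Proof.
move=> S_adj; rewrite cardE -(size_map (@nat_of_ord n)).
apply: (@leq_trans (size [:: t.-1; t.+1])) => //; apply: uniq_leq_size.
  by rewrite map_inj_uniq ?enum_uniq //; exact: ord_inj.
move=> x /mapP[k]; rewrite mem_enum => /S_adj tk ->; move: tk; rewrite /adjacent !inE; lia.
Qed.

End Indices.

Lemma inFn_delta n (j : 'I_n) : inFn (delta_mx j 0 : 'cV['F_2]_n).
Proof.
move=> i i' ii'; rewrite !mxE !andbT.
case: (i =P j) => [ij|_]; case: (i' =P j) => [i'j|_]; try by case=> /eqP.
by move: ii'; rewrite ij i'j; lia.
Qed.

Lemma inFn_delta2 n (j k : 'I_n) :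
  ~~ adjacent j k -> inFn (delta_mx j 0 + delta_mx k 0 : 'cV['F_2]_n).
Proof.
move=> not_jk i i' ii'.
have supp l : (delta_mx j 0 + delta_mx k 0 : 'cV['F_2]_n) l 0 = 1 -> (l == j) || (l == k).
  by rewrite !mxE !andbT; do 2 case: eqP.
move=> [/supp]; rewrite -!val_eqE /= => ij /supp; rewrite -!val_eqE /= => i'j.
by move: not_jk; rewrite /adjacent; lia.
Qed.

Section FnGood.
Variables (n : nat) (A : 'M['F_2]_n).
Hypothesis goodA : Fn_good A.
Let unitA : A \in unitmx := goodA.1.

Let next_rows_adjacent_ones (r s j k : 'I_n) :
  s = r.+1 :> nat -> A r j = 1 -> A s k = 1 -> adjacent j k.
Proof.
move=> rs Arj Ask.
have no_common_col c : A r c = 1 -> A s c = 1 -> False.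
  by move=> Arc Asc; apply: (goodA.2 _ (inFn_delta (j := c)) r s rs); rewrite -colE !mxE.
apply/negPn/negP => not_jk.
have Ark : A r k = 0 by apply: F2_neq1; apply/eqP => /no_common_col; apply.
have Asj : A s j = 0 by apply: F2_neq1; apply/eqP; apply: no_common_col.
apply: (goodA.2 _ (inFn_delta2 not_jk) r s rs).
by rewrite mulmxDr -!colE !mxE Arj Ark Asj Ask addr0 add0r.
Qed.

Lemma Fn_good_adjacent_ones (r s j k : 'I_n) :
  adjacent r s -> A r j = 1 -> A s k = 1 -> adjacent j k.
Proof.
case/orP=> /eqP/esym rs Arj Ask; first exact: next_rows_adjacent_ones rs Arj Ask.
by rewrite adjacentC; apply: next_rows_adjacent_ones rs Ask Arj.
Qed.

Lemma Fn_good_end_col_ones i j : extremal j -> A i j = 1 -> extremal i.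
Proof.
move=> j_end Aij; case: (extremal_or_inner i) => // /inner_neighbours[a [b [ai bi]]].
case/negP; apply/eqP/(single_common_one_eq unitA) => k k' Aak Abk'; apply: val_inj => /=.
move: j_end (ltn_ord k) (ltn_ord k').
move: (Fn_good_adjacent_ones ai Aak Aij) (Fn_good_adjacent_ones bi Abk' Aij).
rewrite /extremal /adjacent; lia.
Qed.

Lemma Fn_good_inner_row_delta (i : 'I_n) :
  (0 < i < n.-1)%N -> exists k, row i A = delta_mx 0 k.
Proof.
case/inner_neighbours=> a [b [ai bi ab]]; have [k0 Aik0] := row_has_one i unitA.
have single k : A i k = 1 -> k = k0.
  move=> Aik; apply/eqP/negPn/negP; rewrite -val_eqE /= => kk0.
  case/negP: ab; apply/eqP/(single_common_one_eq unitA) => m m' Aam Abm'.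
  apply: val_inj => /=; move: kk0.
  move: (Fn_good_adjacent_ones ai Aam Aik) (Fn_good_adjacent_ones ai Aam Aik0).
  move: (Fn_good_adjacent_ones bi Abm' Aik) (Fn_good_adjacent_ones bi Abm' Aik0).
  rewrite /adjacent; lia.
exists k0; apply/rowP => k; rewrite !mxE eqxx /=.
by case: eqP => [->//|/eqP kk0]; apply: F2_neq1; exact: contra_neq (single k) kk0.
Qed.

Lemma Fn_good_card_ones_le2 (i : 'I_n) : (#|ones A i| <= 2)%N.
Proof.
have [n_le1|n_gt1] := leqP n 1.
  by apply: leq_trans (max_card _) _; rewrite card_ord; lia.
have [r ri] := exists_adjacent i n_gt1; have [t Art] := row_has_one r unitA.
apply: (@card_adjacent_le2 _ _ t) => k; rewrite inE => /eqP.
exact: Fn_good_adjacent_ones ri Art.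
Qed.

Lemma Fn_good_end_row_end_one (i : 'I_n) :
  extremal i -> exists j, extremal j /\ A i j = 1.
Proof.
move=> i_end; have [k0 Aik0] := row_has_one i unitA.
have [n_le2|n_gt2] := leqP n 2.
  by exists k0; split=> //; rewrite /extremal; have := ltn_ord k0; lia.
have lt0 : (0 < n)%N by lia.
have lt_last : (n.-1 < n)%N by lia.
pose c0 := Ordinal lt0; pose c1 := Ordinal lt_last.
have [r0 Ar0] := col_has_one c0 unitA; have [r1 Ar1] := col_has_one c1 unitA.
have [<-|r0i] := eqVneq r0 i; first by exists c0; split=> //; left.
have [<-|r1i] := eqVneq r1 i; first by exists c1; split=> //; right.
have r0_end : extremal r0 by apply: Fn_good_end_col_ones Ar0; left.
have r1_end : extremal r1 by apply: Fn_good_end_col_ones Ar1; right.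
have r10 : r1 = r0.
  by apply: val_inj; move: r0i r1i r0_end r1_end i_end; rewrite -!val_eqE /extremal /=; lia.
rewrite {}r10 in Ar1.
have [r r_r0] := exists_adjacent r0 (ltnW n_gt2); have [t Art] := row_has_one r unitA.
have t0 := Fn_good_adjacent_ones r_r0 Art Ar0.
have t_last := Fn_good_adjacent_ones r_r0 Art Ar1.
(* Row r has a 1 adjacent to both column 1 and column n: n = 3 and r is the middle row. *)
have r_i : adjacent r i.
  by move: t0 t_last r_r0 i_end r0_end (ltn_ord r); rewrite /adjacent /extremal /=; lia.
exists k0; split=> //; move: t0 t_last (Fn_good_adjacent_ones r_i Art Aik0) (ltn_ord k0).
by rewrite /adjacent /extremal /=; lia.
Qed.

Lemma Fn_good_end_row_second_one (i a b : 'I_n) :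
  extremal i -> a != b -> A i a = 1 -> A i b = 1 -> extremal a ->
  nat_of_ord b = 2%N \/ nat_of_ord b = (n - 3)%N.
Proof.
move=> i_end ab Aia Aib a_end.
have n_gt1 : (1 < n)%N by move: ab (ltn_ord a) (ltn_ord b); rewrite -val_eqE /=; lia.
have [r ri] := exists_adjacent i n_gt1; have [t Art] := row_has_one r unitA.
move: ab a_end (ltn_ord b).
move: (Fn_good_adjacent_ones ri Art Aia) (Fn_good_adjacent_ones ri Art Aib).
by rewrite -val_eqE /adjacent /extremal /=; lia.
Qed.

Lemma Fn_good_end_row_two_ones (i : 'I_n) : extremal i -> #|ones A i| = 2%N ->
  exists j1 j2 : 'I_n, j1 != j2 /\ A i j1 = 1 /\ A i j2 = 1 /\ extremal j1 /\
    (nat_of_ord j2 = 2%N \/ nat_of_ord j2 = (n - 3)%N).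
Proof.
move=> i_end /eqP/cards2P[x [y [xy ones_i]]].
have one_at k : k \in [set x; y] -> A i k = 1 by rewrite -ones_i inE => /eqP.
have Aix : A i x = 1 by apply: one_at; rewrite !inE eqxx.
have Aiy : A i y = 1 by apply: one_at; rewrite !inE eqxx orbT.
have [j0 [j0_end Aij0]] := Fn_good_end_row_end_one i_end.
have : j0 \in [set x; y] by rewrite -ones_i inE Aij0.
rewrite !inE => /orP[]/eqP j0E; rewrite j0E in j0_end.
  exists x, y; do !split=> //.
  exact: Fn_good_end_row_second_one i_end xy Aix Aiy j0_end.
rewrite eq_sym in xy; exists y, x; do !split=> //.
exact: Fn_good_end_row_second_one i_end xy Aiy Aix j0_end.
Qed.

End FnGood.

(* 0-based indices: row/column 1 = 0, n = n-1, 3 = 2, n-2 = n-3 *)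
Theorem corollary1 (n : nat) (A : 'M['F_2]_n) :
  Fn_good A ->
  (* (1) *)
  (forall i j : 'I_n,
      (nat_of_ord j = 0%N \/ nat_of_ord j = n.-1) -> A i j = 1 ->
      nat_of_ord i = 0%N \/ nat_of_ord i = n.-1) /\
  (* (2) *)
  (forall i : 'I_n, (0 < nat_of_ord i < n.-1)%N ->
      exists k : 'I_n, row i A = delta_mx 0 k) /\
  (forall i1 i2 : 'I_n, (0 < nat_of_ord i1 < n.-1)%N ->
      (0 < nat_of_ord i2 < n.-1)%N -> row i1 A = row i2 A -> i1 = i2) /\
  (* (3) and (4), for rows 1 and n *)
  (forall i : 'I_n, (nat_of_ord i = 0%N \/ nat_of_ord i = n.-1) ->
      (1 <= #|[set j : 'I_n | A i j == 1%R]| <= 2)%N /\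
      (exists j : 'I_n, (nat_of_ord j = 0%N \/ nat_of_ord j = n.-1) /\ A i j = 1) /\
      (#|[set j : 'I_n | A i j == 1%R]| = 2%N ->
         exists j1 j2 : 'I_n, j1 != j2 /\ A i j1 = 1 /\ A i j2 = 1 /\
           (nat_of_ord j1 = 0%N \/ nat_of_ord j1 = n.-1) /\
           (nat_of_ord j2 = 2%N \/ nat_of_ord j2 = (n - 3)%N))).
Proof.
move=> goodA; have unitA := goodA.1.
split; first exact: Fn_good_end_col_ones goodA.
split; first exact: Fn_good_inner_row_delta goodA.
split; first by move=> i1 i2 _ _; apply: unitmx_row_inj.
move=> i i_end; split; last split.
- rewrite (Fn_good_card_ones_le2 goodA) andbT card_gt0.
  by have [j Aij] := row_has_one i unitA; apply/set0Pn; exists j; rewrite inE Aij.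
- exact: Fn_good_end_row_end_one goodA i i_end.
- exact: Fn_good_end_row_two_ones goodA i i_end.
Qed.
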